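(* Let $q$ be a prime power with $q\equiv 1\pmod 4$, let $b\in\mathbb{F}_q$ with $b^2=-1$, let $f(x)=(x+1)(x+b)\in\mathbb{F}_q[x]$, and let $\alpha\in\mathbb{F}_{q^4}$ be normal over $\mathbb{F}_q$. Let $u,v\in\mathbb{F}_q^*$. If $\gamma=u\,L_f(\alpha)+v$ is primitive in $\mathbb{F}_{q^4}$, then $\gamma$ is $2$-normal over $\mathbb{F}_q$.
   Context: For $h(x)=\sum_i a_ix^i\in\mathbb{F}_q[x]$, $L_h(\alpha)=\sum_i a_i\alpha^{q^i}$. An element $\alpha\in\mathbb{F}_{q^n}$ is normal over $\mathbb{F}_q$ if $\alpha,\alpha^q,\dots,\alpha^{q^{n-1}}$ form an $\mathbb{F}_q$-basis of $\mathbb{F}_{q^n}$; it is primitive if it generates $\mathbb{F}_{q^n}^*$. For $\alpha\in\mathbb{F}_{q^n}$ let $g_\alpha(x)=\sum_{i=0}^{n-1}\alpha^{q^i}x^{n-1-i}$; $\alpha$ is $k$-normal over $\mathbb{F}_q$ if $\gcd(x^n-1,g_\alpha(x))$ in $\mathbb{F}_{q^n}[x]$ has degree $k$ (here $n=4$). *)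

(* F_q is modelled by F : finFieldType (q = #|F|),
   F_{q^n} by L : fieldExtType F (finite dimensional over F). *)
From HB Require Import structures.
From mathcomp Require Import all_boot all_order all_algebra all_field.
Set Implicit Arguments. Unset Strict Implicit. Unset Printing Implicit Defensive.
Import GRing.Theory.
Local Open Scope ring_scope.

Definition Lpoly (F : finFieldType) (L : fieldExtType F) (h : {poly F}) (a : L) : L :=
  \sum_(i < size h) h`_i *: a ^+ (#|F| ^ i).

Definition normal_elt (F : finFieldType) (L : fieldExtType F) (a : L) : Prop :=
  basis_of fullv [seq a ^+ (#|F| ^ i) | i <- iota 0 (\dim {:L})].

Definition primitive_elt (F : finFieldType) (L : fieldExtType F) (a : L) : Prop :=
  a != 0 /\ forall y : L, y != 0 -> exists k : nat, y = a ^+ k.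

Definition g_poly (F : finFieldType) (L : fieldExtType F) (a : L) : {poly L} :=
  \sum_(i < \dim {:L}) (a ^+ (#|F| ^ i))%:P * 'X^(\dim {:L} - 1 - i).

Definition k_normal (F : finFieldType) (L : fieldExtType F) (k : nat) (a : L) : Prop :=
  (size (gcdp ('X^(\dim {:L}) - 1) (g_poly a))).-1 = k.

(* Let s be the Frobenius x |-> x ^+ q and a_i = s^i(alpha).  The resolvents
   R_beta = \sum_i beta^i a_i satisfy beta s(R_beta) = R_beta when beta^4 = 1,
   and (1 - b) L_f(alpha) = R_1 + b R_(-b).  Hence gamma = c + w with s(c) = c
   and s(w) = b w, so s^i(gamma) = c + b^i w and
     g_gamma = (x + 1)(x + b)(c (x - b) + w (x - 1)),
     x^4 - 1 = (x + 1)(x + b)(x - 1)(x - b);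
   the gcd thus has degree exactly 2 as soon as c and w are nonzero.  If c = 0
   or w = 0 then s(gamma) is an F-multiple of gamma, which forces
   gamma^((q-1)^2) = 1: impossible for a generator of a group of order q^4 - 1. *)

From HB Require Import structures.
From mathcomp Require Import all_boot all_order all_algebra all_field.
From mathcomp Require Import ring zify.
Import GRing.Theory.
Set Implicit Arguments.
Unset Strict Implicit.
Unset Printing Implicit Defensive.
Local Open Scope ring_scope.

Lemma card_finField_unit_leq (K : finFieldType) (N : nat) :
  (0 < N)%N -> (forall y : K, y != 0 -> y ^+ N = 1) -> (#|K|.-1 <= N)%N.
Proof.
move=> N_gt0 unityN.
rewrite -(cardC1 0) cardE.
apply: max_unity_roots N_gt0 _ (enum_uniq _).
by apply/allP => y; rewrite mem_enum !inE unity_rootE => /unityN ->.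
Qed.

Section Frobenius.
Variables (F : finFieldType) (L : fieldExtType F).
Local Notation q := #|F|.

Lemma card_finFieldExt : #|FinFieldExtType L| = (q ^ \dim {:L})%N.
Proof.
by rewrite -(card_vspacef (Vector.class (finvect_type L : vectType F))) card_vspace.
Qed.

Definition frob (x : L) : L := x ^+ q.

Lemma frob_is_zmod_morphism : zmod_morphism frob.
Proof.
have [p _ pcharFp] := finPcharP F.
have pcharLp : p \in [pchar L] by rewrite (pchar_lalg L).
move=> x y; rewrite /frob (card_pprimeChar pcharFp).
elim: (logn p q) => [|n IHn]; first by rewrite !expr1.
by rewrite expnSr !exprM IHn -!(pFrobenius_autE pcharLp) rmorphB.
Qed.

Lemma frob_is_monoid_morphism : monoid_morphism frob.
Proof. by split=> [|x y]; rewrite /frob ?expr1n ?exprMn. Qed.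

Lemma frob_is_scalable : scalable frob.
Proof. by move=> a x; rewrite /frob exprZn expf_card. Qed.

HB.instance Definition _ := GRing.isZmodMorphism.Build L L frob frob_is_zmod_morphism.
HB.instance Definition _ := GRing.isMonoidMorphism.Build L L frob frob_is_monoid_morphism.
HB.instance Definition _ := GRing.isScalable.Build F L L *:%R frob frob_is_scalable.

Lemma frob_expn (x : L) i : frob (x ^+ (q ^ i)) = x ^+ (q ^ i.+1).
Proof. by rewrite /frob -exprM expnSr. Qed.

Lemma expr_card_dim (x : L) : x ^+ (q ^ \dim {:L}) = x.
Proof. by apply/eqP; rewrite -(Fermat's_little_theorem (aspacef L)) memvf. Qed.

Definition resolvent (beta : F) (x : L) : L :=
  \sum_(i < \dim {:L}) beta ^+ i *: x ^+ (q ^ i).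

Lemma resolvent_frob (beta : F) (x : L) :
  beta ^+ \dim {:L} = 1 -> beta *: frob (resolvent beta x) = resolvent beta x.
Proof.
rewrite /resolvent linear_sum scaler_sumr; have := expr_card_dim x.
case: (\dim {:L}) => [|n] x_n beta_n; first by rewrite !big_ord0.
under eq_bigr do rewrite linearZ /= frob_expn scalerA -exprS.
by rewrite big_ord_recr big_ord_recl /= x_n beta_n expn0 expr1 addrC.
Qed.

Lemma expr_card_fixedD_eigen (c w : L) (beta : F) i :
  frob c = c -> frob w = beta *: w -> (c + w) ^+ (q ^ i) = c + beta ^+ i *: w.
Proof.
move=> c_fixed w_eigen; elim: i => [|i IHi]; first by rewrite expn0 expr1 scale1r.
by rewrite -frob_expn IHi rmorphD /= linearZ /= c_fixed w_eigen scalerA exprS mulrC.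
Qed.

Lemma primitive_frob_neq_scale (gamma : L) (beta : F) :
  (1 < \dim {:L})%N -> primitive_elt gamma -> frob gamma != beta *: gamma.
Proof.
move=> dim_gt1 [gamma_neq0 gamma_gen]; apply/eqP => gamma_eigen.
have q_gt1 := finNzRing_gt1 F.
have gamma_q1 : gamma ^+ q.-1 = beta%:A.
  by apply: (mulIf gamma_neq0); rewrite -exprSr (ltn_predK q_gt1) mulr_algl.
have beta_neq0 : beta != 0.
  apply: contraNneq gamma_neq0 => beta0.
  by move: gamma_q1; rewrite beta0 scale0r => /eqP; rewrite expf_eq0 => /andP[].
have beta_q1 : beta ^+ q.-1 = 1.
  by apply: (mulIf beta_neq0); rewrite -exprSr (ltn_predK q_gt1) expf_card mul1r.
have unity : forall y : FinFieldExtType L, y != 0 -> y ^+ (q.-1 * q.-1) = 1.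
  move=> y /gamma_gen[k ->].
  by rewrite exprAC exprM gamma_q1 exprZn beta_q1 expr1n scale1r expr1n.
have N_gt0 : (0 < q.-1 * q.-1)%N by rewrite muln_gt0 -subn1 subn_gt0 q_gt1.
have := card_finField_unit_leq N_gt0 unity; rewrite card_finFieldExt.
have : (q ^ 2 <= q ^ \dim {:L})%N by rewrite leq_pexp2l // ltnW.
move: (q ^ \dim {:L})%N q_gt1 => Q; rewrite expnS expn1.
by case: q => // m /= m_gt0; nia.
Qed.

End Frobenius.

Lemma finField_odd_sqrtN1_neq1 (F : finFieldType) (b : F) :
  odd #|F| -> b ^+ 2 = -1 -> b != 1.
Proof.
move=> odd_q b_sqr; have two_neq0 : 2%:R != 0 :> F.
  apply: contraTneq odd_q => two0.
  have pchar2 : 2 \in [pchar F] by rewrite inE /= two0 eqxx.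
  have := finNzRing_gt1 F; rewrite (card_pprimeChar pchar2).
  by case: logn => // n _; rewrite expnS oddM.
apply: contra_neq two_neq0 => b1.
by move: b_sqr; rewrite b1 expr1n => /eqP; rewrite -addr_eq0 => /eqP.
Qed.

(* With c fixed by the Frobenius and w an eigenvector for the eigenvalue beta,
   c + beta ^+ i * w is the i-th conjugate of c + w, so the sums below are
   the polynomials g_(c + w). *)
Section QuarticRootsOfUnity.
Variables (R : fieldType) (beta : R).
Hypothesis beta_sqr : beta ^+ 2 = -1.

Let betaP_sqr : beta%:P ^+ 2 = -1 :> {poly R}.
Proof. by rewrite -rmorphXn beta_sqr rmorphN1. Qed.

Lemma Xn4_sub1_factor :
  'X^4 - 1 = (('X + 1) * ('X + beta%:P)) * (('X - 1) * ('X - beta%:P)) :> {poly R}.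
Proof.
transitivity (('X^2 - 1) * ('X^2 - beta%:P ^+ 2) : {poly R}); last by ring.
by rewrite betaP_sqr; ring.
Qed.

Lemma eigen_sum_factor (c w : R) :
  \sum_(i < 4) (c + beta ^+ i * w)%:P * 'X^(4 - 1 - i)
  = (('X + 1) * ('X + beta%:P)) * (c%:P * ('X - beta%:P) + w%:P * ('X - 1)).
Proof.
rewrite !big_ord_recl big_ord0 /bump /= expr0 expr1 (exprS beta 2) beta_sqr.
rewrite !(polyCD, polyCM, polyCN) polyC1.
transitivity (c%:P * ('X + 1) * ('X^2 - beta%:P ^+ 2)
              + w%:P * ('X^2 - 1) * ('X + beta%:P)).
  by rewrite betaP_sqr; ring.
by ring.
Qed.

Lemma size_gcdp_Xn4_sub1_eigen_sum (c w : R) : beta != 1 -> c != 0 -> w != 0 ->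
  size (gcdp ('X^4 - 1) (\sum_(i < 4) (c + beta ^+ i * w)%:P * 'X^(4 - 1 - i))) = 3.
Proof.
move=> beta_neq1 c_neq0 w_neq0.
rewrite Xn4_sub1_factor eigen_sum_factor (eqp_size (gcdp_mul2l _ _ _)).
set h := c%:P * _ + _.
have /eqP size_gcd_h : coprimep (('X - 1) * ('X - beta%:P)) h.
  rewrite coprimepMl -polyC1 !(coprimep_sym _ h) !coprimep_XsubC /root /h !hornerE.
  by rewrite !subrr !mulr0 addr0 add0r !mulf_neq0 // subr_eq0 // eq_sym.
have size_lin : size (('X + 1) * ('X + beta%:P)) = 3.
  by rewrite -polyC1 size_mul ?size_XaddC // -size_poly_eq0 size_XaddC.
by rewrite size_mul ?size_lin ?size_gcd_h // -size_poly_eq0 ?size_lin ?size_gcd_h.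
Qed.

End QuarticRootsOfUnity.

Lemma Lpoly_XaddC_resolvent (F : finFieldType) (L : fieldExtType F) (b : F) (x : L) :
  b ^+ 2 = -1 -> \dim {:L} = 4%N ->
  (1 - b) *: Lpoly (('X + 1) * ('X + b%:P)) x = resolvent 1 x + b *: resolvent (- b) x.
Proof.
move=> b_sqr dimL.
have size_f : size (('X + 1) * ('X + b%:P)) = 3%N.
  by rewrite -polyC1 size_mul ?size_XaddC // -size_poly_eq0 size_XaddC.
rewrite /Lpoly size_f.
have -> : ('X + 1) * ('X + b%:P) = 'X^2 + (1 + b)%:P * 'X + b%:P :> {poly F}.
  by rewrite polyCD polyC1; ring.
rewrite /resolvent dimL !big_ord_recl !big_ord0 /=; rewrite /bump /= !addn0 !add1n.
rewrite !(coefD, coefXn, coefCM, coefX, coefC) /=.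
move: (x ^+ (#|F| ^ 0)) (x ^+ (#|F| ^ 1)) (x ^+ (#|F| ^ 2)) (x ^+ (#|F| ^ 3)).
move=> a0 a1 a2 a3.
have scale_alg k (y : L) : k *: y = in_alg L k * y by rewrite mulr_algl.
rewrite !scale_alg !(rmorphD, rmorphB, rmorphM, rmorphN, rmorphXn, rmorph1, rmorph0).
have B_sqr : in_alg L b ^+ 2 = -1 by rewrite -rmorphXn b_sqr rmorphN1.
apply/eqP; rewrite -subr_eq0; apply/eqP.
transitivity (- (in_alg L b ^+ 2 + 1)
              * (a0 + a2 * in_alg L b - (in_alg L b ^+ 2 - 1) * a3)).
  ring.
by rewrite B_sqr addNr oppr0 mul0r.
Qed.

Lemma Lpoly_XaddC_fixedD_eigen (F : finFieldType) (L : fieldExtType F)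
    (b u v : F) (x : L) :
  \dim {:L} = 4%N -> b ^+ 2 = -1 -> b != 1 ->
  exists c w, [/\ u *: Lpoly (('X + 1) * ('X + b%:P)) x + v%:A = c + w,
                  frob c = c & frob w = b *: w].
Proof.
move=> dimL b_sqr b_neq1; pose k := u / (1 - b).
exists (v%:A + k *: resolvent 1 x), ((k * b) *: resolvent (- b) x); split.
- rewrite (_ : u = k * (1 - b)); last by rewrite divfK // subr_eq0 eq_sym.
  by rewrite -scalerA Lpoly_XaddC_resolvent // scalerDr scalerA addrC addrA.
- have := resolvent_frob x (expr1n _ _); rewrite scale1r => R1_fixed.
  by rewrite rmorphD /= !linearZ /= rmorph1 R1_fixed.
have nb_unity : (- b) ^+ \dim {:L} = 1.
  by rewrite dimL -[4%N]/(2 * 2)%N exprM sqrrN b_sqr sqrrN expr1n.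
have Rb_eigen : frob (resolvent (- b) x) = b *: resolvent (- b) x.
  rewrite -{2}(resolvent_frob x nb_unity) scalerA.
  by rewrite mulrN -expr2 b_sqr opprK scale1r.
by rewrite linearZ /= Rb_eigen !scalerA [b * _]mulrC.
Qed.

Theorem lemma7p1 (F : finFieldType) (L : fieldExtType F)
  (hdim : \dim {:L} = 4%N) (hq : (#|F| %% 4 = 1)%N)
  (b : F) (hb : b ^+ 2 = -1)
  (alpha : L) (halpha : normal_elt alpha)
  (u v : F) (hu : u != 0) (hv : v != 0) :
  let f : {poly F} := ('X + 1) * ('X + b%:P) in
  let gamma : L := u *: Lpoly f alpha + v%:A in
  primitive_elt gamma -> k_normal 2 gamma.
Proof.
move=> f gamma gamma_prim.
have b_neq1 : b != 1 by apply: finField_odd_sqrtN1_neq1 hb; rewrite -(@odd_mod _ 4) ?hq.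
have [c [w [gamma_cw c_fixed w_eigen]]] :=
  Lpoly_XaddC_fixedD_eigen u v alpha hdim hb b_neq1.
rewrite -/f -/gamma in gamma_cw.
have dim_gt1 : (1 < \dim {:L})%N by rewrite hdim.
have c_neq0 : c != 0.
  apply: contraNneq (primitive_frob_neq_scale b dim_gt1 gamma_prim) => c0.
  by rewrite gamma_cw c0 add0r w_eigen.
have w_neq0 : w != 0.
  apply: contraNneq (primitive_frob_neq_scale 1 dim_gt1 gamma_prim) => w0.
  by rewrite gamma_cw w0 addr0 c_fixed scale1r.
have b_alg_expr i : (b ^+ i)%:A = b%:A ^+ i :> L by rewrite exprZn expr1n.
have bA_sqr : b%:A ^+ 2 = -1 :> L by rewrite -b_alg_expr hb scaleN1r.
have bA_neq1 : b%:A != 1 :> L by rewrite -in_algE fmorph_eq1.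
rewrite /k_normal /g_poly hdim.
under eq_bigr => i _ do
  rewrite gamma_cw (expr_card_fixedD_eigen _ c_fixed w_eigen) -mulr_algl b_alg_expr.
by rewrite (size_gcdp_Xn4_sub1_eigen_sum bA_sqr bA_neq1 c_neq0 w_neq0).
Qed.
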